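(* Assume condition (PV) holds. Then, locally (for conditioning values $d\in\mathcal{D}(\epsilon)$ and $z\in\mathcal{Z}(\epsilon)$): (a) $Y\perp\!\!\!\perp Z\mid(D,U)$; (b) $W\perp\!\!\!\perp(D,Z)\mid U$. If in addition $\eta_a\perp\!\!\!\perp U\mid D=d$ for all $d\in\mathcal{D}(\epsilon)$, then also: (c) $A\perp\!\!\!\perp U\mid D$.
   Context: Setting. All random variables live on one probability space. The variables are: - $Y\in\mathbb{R}$, the outcome; - $A\in\{0,1\}$, the treatment; - $D\in\mathbb{R}$, the running variable, with cutoff $d^*$; - $Z$, a placebo treatment, and $W$, a placebo outcome; - $U$, an unobserved confounder; - $\eta_y,\eta_w,\eta_a$, heterogeneity terms. There are structural functions $Y(a,d,z,u,\eta_y)$, $W(a,d,z,u,\eta_w)$ and $A(d,z,u,\eta_a)$, written $Y(a,d,u,\eta_y)$, $W(u,\eta_w)$ and $A(d,\eta_a)$ under exclusion. For $\epsilon>0$, $\mathcal{D}(\epsilon)=(d^*-\epsilon,d^* )\cup(d^*,d^*+\epsilon)$, and $\mathcal{Z}(\epsilon)$ is a set with $P(Z\in\mathcal{Z}(\epsilon)\mid D\in\mathcal{D}(\epsilon))=1$. (PV) There is $\epsilon>0$ such that for all $d\in\mathcal{D}(\epsilon)$ and $z\in\mathcal{Z}(\epsilon)$: (a) if $A=a$, $D=d$, $Z=z$, then $Y=Y(a,d,z,U,\eta_y)$ and $W=W(a,d,z,U,\eta_w)$ a.s.; if $D=d$, $Z=z$, then $A=A(d,z,U,\eta_a)$ a.s.;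 (b) $Z\perp\!\!\!\perp(\eta_y,\eta_a)\mid(U,D)$ and $\eta_w\perp\!\!\!\perp(D,Z)\mid U$; (c) densities exist and $f(a,d,z\mid u)>0$ whenever $f(u)>0$; (d) a.s. $Y(a,d,z,U,\eta_y)=Y(a,d,U,\eta_y)$, $W(a,d,z,U,\eta_w)=W(U,\eta_w)$ and $A(d,z,U,\eta_a)=A(d,\eta_a)$. *)

From HB Require Import structures.
From mathcomp Require Import all_boot all_order all_algebra.
From mathcomp Require Import all_classical all_reals all_analysis.
Set Implicit Arguments. Unset Strict Implicit. Unset Printing Implicit Defensive.
Import Order.TTheory GRing.Theory Num.Theory.
Local Open Scope classical_set_scope.
Local Open Scope ring_scope.

Definition Dset {R : realType} (dstar eps : R) : set R :=
  [set x | dstar - eps < x < dstar + eps /\ x != dstar].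

(* Conditional independence  X _||_ Y | C  under the conditional probability
   P( . | E ), for an event E (used with E = {D in D(eps)} to express the
   "local" statements).  Definition (Kallenberg): for every measurable set A of
   the range of X, the conditional probability P_E(X in A | Y, C) has a version
   that is a measurable function phi(C) of C alone, i.e. for all measurable
   B, G:
     P_E(X in A, Y in B, C in G) = E_E[ phi(C) ; Y in B, C in G ].
   Multiplying through by P(E) gives the form below (which does not need
   P(E) > 0).  Rectangles B x G generate sigma(Y, C), so this is exactly
   P_E(X in A | Y, C) = phi(C)  P_E-a.s. *)
Definition cond_indep_on {R : realType} {dT dX dY dC : measure_display}
  {T : measurableType dT} (P : probability T R) (E : set T)
  {TX : measurableType dX} {TY : measurableType dY} {TC : measurableType dC}
  (X : T -> TX) (Y : T -> TY) (C : T -> TC) : Prop :=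
  forall A : set TX, measurable A ->
  exists phi : TC -> R,
    measurable_fun setT phi /\ (forall c, 0 <= phi c <= 1) /\
    forall (B : set TY) (G : set TC), measurable B -> measurable G ->
      P (E `&` X @^-1` A `&` Y @^-1` B `&` C @^-1` G) =
      (\int[P]_(x in E `&` Y @^-1` B `&` C @^-1` G) (phi (C x))%:E)%E.

From HB Require Import structures.
From mathcomp Require Import all_boot all_order all_algebra.
From mathcomp Require Import all_classical all_reals all_analysis.
From mathcomp Require Import measurable_realfun.
Set Implicit Arguments. Unset Strict Implicit. Unset Printing Implicit Defensive.
Import Order.TTheory GRing.Theory Num.Theory.
Import HBNNSimple.
Local Open Scope classical_set_scope.
Local Open Scope ring_scope.

(* Conditional independence [cond_indep_on P E X Y C] obeys the graphoid
   rules: it is symmetric in X and Y, X _||_ V | C implies X _||_ h (C, V) | C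
   for measurable h, and C may be reparametrised by a measurable bijection.
   On E = {D in D(eps)}, where Z lies in Z(eps) almost surely, the structural
   equations and the exclusion restrictions make Y a function of
   ((U, D), (eta_y, eta_a)), W one of (U, eta_w) and A one of (D, eta_a), so
   (a), (b) and (c) follow from (PV)(b) and the extra hypothesis by these
   rules.
   Symmetry is the substantial rule.  It uses the conditional probability
   P_E(S | C), a Radon-Nikodym derivative of the law of C on E `&` S with
   respect to its law on E, and the tower identity
   \int_(E `&` S) f (C x) = \int_E P_E(S | C)(x) f (C x). *)

Lemma measurable_preimage d1 d2 (T1 : measurableType d1)
    (T2 : measurableType d2) (f : T1 -> T2) (G : set T2) :
  measurable_fun setT f -> measurable G -> measurable (f @^-1` G).
Proof. by move=> mf mG; rewrite -[X in measurable X]setTI; exact: mf. Qed.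

(* The measurability proof is an argument so that the measure structure of
   [pushforward m f] can be inferred; likewise [mg] and [g0] in [mdensity]. *)
Definition mpushforward d1 d2 (T1 : measurableType d1) (T2 : measurableType d2)
  (R : realType) (m : set T1 -> \bar R) (f : T1 -> T2)
  (mf : measurable_fun setT f) := pushforward m f.

Section mpushforward_measure.
Context d1 d2 (T1 : measurableType d1) (T2 : measurableType d2) (R : realType).
Variables (m : {measure set T1 -> \bar R}) (f : T1 -> T2).
Variable mf : measurable_fun setT f.

Let mpushforward0 : mpushforward m mf set0 = 0%E.
Proof. exact: measure0. Qed.

Let mpushforward_ge0 A : (0 <= mpushforward m mf A)%E.
Proof. exact: measure_ge0. Qed.

Let mpushforward_sigma_additive : semi_sigma_additive (mpushforward m mf).
Proof. exact: measure_semi_sigma_additive. Qed.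

HB.instance Definition _ := isMeasure.Build _ _ _ (mpushforward m mf)
  mpushforward0 mpushforward_ge0 mpushforward_sigma_additive.

End mpushforward_measure.

Section mpushforward_finite.
Context d1 d2 (T1 : measurableType d1) (T2 : measurableType d2) (R : realType).
Variables (m : {finite_measure set T1 -> \bar R}) (f : T1 -> T2).
Variable mf : measurable_fun setT f.

Let mpushforward_fin : fin_num_fun (mpushforward m mf).
Proof. by move=> A mA; exact/fin_num_measure/measurable_preimage. Qed.

HB.instance Definition _ := Measure_isFinite.Build _ _ _ (mpushforward m mf)
  mpushforward_fin.

End mpushforward_finite.

Definition mdensity d (T : measurableType d) (R : realType)
  (mu : set T -> \bar R) (g : T -> R) (mg : measurable_fun setT g)
  (g0 : forall x, 0 <= g x) (A : set T) := (\int[mu]_(x in A) (g x)%:E)%E.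

Section mdensity.
Context d (T : measurableType d) (R : realType).
Variables (mu : {measure set T -> \bar R}) (g : T -> R).
Variables (mg : measurable_fun setT g) (g0 : forall x, 0 <= g x).
Local Notation nu := (mdensity mu mg g0).
Local Open Scope ereal_scope.

Let mdensity0 : nu set0 = 0.
Proof. exact: integral_set0. Qed.

Let mdensity_ge0 A : 0 <= nu A.
Proof. by apply: integral_ge0 => x _; rewrite lee_fin. Qed.

Let mdensity_sigma_additive : semi_sigma_additive nu.
Proof.
apply: semi_sigma_additive_nng_induced => [|x]; first exact/measurable_EFinP.
by rewrite lee_fin.
Qed.

HB.instance Definition _ := isMeasure.Build _ _ _ nu
  mdensity0 mdensity_ge0 mdensity_sigma_additive.

Lemma integral_mdensity_nnsfun (h : {nnsfun T >-> R}) :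
  \int[nu]_x (h x)%:E = \int[mu]_x ((h x)%:E * (g x)%:E).
Proof.
have mh r : measurable (h @^-1` [set r]) by exact: measurable_preimage.
have mgE : measurable_fun setT (EFin \o g) by exact/measurable_EFinP.
rewrite integralT_nnsfun sintegralE.
transitivity (\sum_(r \in range h)
    \int[mu]_x ((r * \1_(h @^-1` [set r]) x)%:E * (g x)%:E)); last first.
  rewrite -ge0_integral_fsum//; last 2 first.
  - move=> r; apply: emeasurable_funM => //.
    by apply/measurable_EFinP; apply: measurable_funM => //; exact: measurable_indic.
  - by move=> r x _; rewrite mule_ge0 ?lee_fin// -lee_fin EFinM nnfun_muleindic_ge0.
  apply: (eq_integral _ (mu := mu)) => x _.
  rewrite -ge0_mule_fsuml => [|r]; first by rewrite fsumEFin// -fimfunE.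
  by rewrite EFinM; exact: nnfun_muleindic_ge0.
apply: eq_fsbigr => r /[!inE] -[t _ <-].
under eq_integral do rewrite EFinM -muleA.
rewrite ge0_integralZl//; last 3 first.
- apply: emeasurable_funM => //.
  by apply/measurable_EFinP; exact: measurable_indic.
- by move=> x _; rewrite mule_ge0// lee_fin.
- by rewrite lee_fin.
congr (_ * _); rewrite [RHS](_ : _ = \int[mu]_(x in h @^-1` [set h t]) (g x)%:E)//.
rewrite [RHS]integral_mkcond; apply: eq_integral => x _.
by rewrite patchE indicE; case: ifPn; rewrite ?mul1e ?mul0e.
Qed.

Lemma ge0_integral_mdensity (f : T -> \bar R) :
  measurable_fun setT f -> (forall x, 0 <= f x) ->
  \int[nu]_x f x = \int[mu]_x (f x * (g x)%:E).
Proof.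
move=> mf f0; pose h := nnsfun_approx measurableT mf.
have hf x : (EFin \o h^~ x) @ \oo --> f x.
  by apply: cvg_nnsfun_approx => // y _; exact: f0.
have h_nd x : {homo (EFin \o h^~ x) : m n / (m <= n)%N >-> m <= n}.
  by move=> m n mn; rewrite lee_fin; exact/lefP/nd_nnsfun_approx.
transitivity (limn (fun n => \int[nu]_x (h n x)%:E)).
  rewrite -monotone_convergence//.
  - by apply: eq_integral => x _; apply/esym/cvg_lim => //; exact: hf.
  - by move=> n; exact/measurable_EFinP/measurable_funP.
  - by move=> n x _; rewrite lee_fin.
  - by move=> x _; exact: h_nd.
transitivity (limn (fun n => \int[mu]_x ((h n x)%:E * (g x)%:E))); last first.
  rewrite -monotone_convergence//.
  - by apply: eq_integral => x _; apply/cvg_lim => //; exact: cvgeZr (hf x).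
  - by move=> n; apply: emeasurable_funM;
      apply/measurable_EFinP => //; exact: measurable_funP.
  - by move=> n x _; rewrite mule_ge0// lee_fin.
  - by move=> x _ m n mn; rewrite lee_wpmul2r ?lee_fin//; exact: h_nd.
by congr (limn _); apply/funext => n; exact: integral_mdensity_nnsfun.
Qed.

End mdensity.

Lemma ge0_integral_mrestr d (T : measurableType d) (R : realType)
    (mu : {measure set T -> \bar R}) (D : set T) (mD : measurable D)
    (f : T -> \bar R) :
  measurable_fun setT f -> (forall x, (0 <= f x)%E) ->
  (\int[mrestr mu mD]_x f x = \int[mu]_(x in D) f x)%E.
Proof.
move=> mf f0.
have m1D : measurable_fun setT (\1_D : T -> R) by exact: measurable_indic.
have D0 x : 0 <= \1_D x :> R by [].
rewrite [LHS](eq_measure_integral (mdensity mu m1D D0)) => [|A mA _]; last first.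
  by rewrite [RHS](_ : _ = \int[mu]_(x in A) (\1_D x)%:E)%E// integral_indic// setIC.
rewrite ge0_integral_mdensity// [RHS]integral_mkcond.
by apply: eq_integral => x _; rewrite patchE indicE; case: ifPn; rewrite ?mule1 ?mule0.
Qed.

Lemma integral_preimage_patch d dC (T : measurableType d)
    (TC : measurableType dC) (R : realType) (mu : {measure set T -> \bar R})
    (C : T -> TC) (S : set T) (G : set TC) (f : TC -> R) :
  (\int[mu]_(x in S `&` C @^-1` G) (f (C x))%:E =
   \int[mu]_(x in S) ((EFin \o f) \_ G) (C x))%E.
Proof. by rewrite integral_mkcondr; apply: eq_integral => x _; rewrite !patchE. Qed.

Lemma eq_measure_prod d1 d2 (T1 : measurableType d1) (T2 : measurableType d2)
    (R : realType) (m1 : {finite_measure set (T1 * T2)%type -> \bar R})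
    (m2 : {measure set (T1 * T2)%type -> \bar R}) :
  (forall A B, measurable A -> measurable B -> m1 (A `*` B) = m2 (A `*` B)) ->
  forall M, measurable M -> m1 M = m2 M.
Proof.
move=> m12; apply: (measure_unique [set A `*` B | A in measurable & B in measurable]
  (fun=> setT)).
- exact: measurable_prod_measurableType.
- move=> _ _ [A1 mA1 [B1 mB1 <-]] [A2 mA2 [B2 mB2 <-]].
  exists (A1 `&` A2); first exact: measurableI.
  by exists (B1 `&` B2); [exact: measurableI|rewrite setXI].
- by move=> _; exists setT => //; exists setT => //; rewrite setXTT.
- by apply/seteqP; split => // x _; exists 0%N.
- by move=> _ [A mA [B mB <-]]; exact: m12.
- by move=> _; rewrite -ge0_fin_numE// fin_num_measure.
Qed.

Section ae_eq_set.
Context d (T : measurableType d) (R : realType) (mu : {measure set T -> \bar R}).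
Variables (S1 S2 : set T) (mS1 : measurable S1) (mS2 : measurable S2).
Hypothesis S12 : {ae mu, forall x, S1 x <-> S2 x}.
Local Open Scope ereal_scope.

Lemma ae_eq_set_integral (f : T -> \bar R) : measurable_fun setT f ->
  \int[mu]_(x in S1) f x = \int[mu]_(x in S2) f x.
Proof.
move=> mf; rewrite integral_mkcond [RHS]integral_mkcond.
apply: ae_eq_integral => //.
- by apply/(measurable_restrictT _ mS1); exact: measurable_funTS.
- by apply/(measurable_restrictT _ mS2); exact: measurable_funTS.
- apply: filterS S12 => x S12x _; rewrite !patchE.
  suff -> : (x \in S1) = (x \in S2) by [].
  by apply/idP/idP; rewrite !inE => /S12x.
Qed.

Lemma ae_eq_set_measure : mu S1 = mu S2.
Proof.
have := ae_eq_set_integral (measurable_cst 1).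
by rewrite !integral_cst// !mul1e.
Qed.

End ae_eq_set.

Lemma ae_imply_setD0 d (T : measurableType d) (R : realType)
    (mu : {measure set T -> \bar R}) (E F : set T) (Q : T -> Prop) :
  measurable (E `\` F) -> mu (E `\` F) = 0%E ->
  {ae mu, forall x, x \in E -> x \in F -> Q x} -> {ae mu, forall x, E x -> Q x}.
Proof.
move=> mEF EF0 EFQ.
have EF : {ae mu, forall x, E x -> F x}.
  by exists (E `\` F); split => // x /= /not_implyP[Ex nFx].
apply: (filterS2 _ _ EFQ EF) => x EFQx EFx Ex.
by apply: EFQx; apply/mem_set; [exact: Ex|exact: EFx].
Qed.

Section conditional_probability.
Context (R : realType) dT (T : measurableType dT) (P : probability T R).
Context dC (TC : measurableType dC) (C : T -> TC) (mC : measurable_fun setT C).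
Local Notation law mS := (mpushforward (mrestr P mS) mC).
Local Open Scope ereal_scope.

Definition is_cond_prob (E S : set T) (psi : TC -> R) :=
  forall G, measurable G ->
  P (E `&` S `&` C @^-1` G) = \int[P]_(x in E `&` C @^-1` G) (psi (C x))%:E.

Lemma ge0_integral_law (S : set T) (mS : measurable S) (f : TC -> \bar R) :
  measurable_fun setT f -> (forall y, 0 <= f y) ->
  \int[P]_(x in S) f (C x) = \int[law mS]_y f y.
Proof.
move=> mf f0; rewrite [RHS]ge0_integral_pushforward// preimage_setT.
by rewrite ge0_integral_mrestr// => [|x]; [exact: measurableT_comp|exact: f0].
Qed.

Lemma ge0_integral_law_preimage (S : set T) (mS : measurable S) (G : set TC)
    (f : TC -> R) :
  measurable G -> measurable_fun setT f -> (forall y, 0 <= f y)%R ->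
  \int[P]_(x in S `&` C @^-1` G) (f (C x))%:E = \int[law mS]_(y in G) (f y)%:E.
Proof.
move=> mG mf f0; rewrite integral_preimage_patch [RHS]integral_mkcond.
rewrite ge0_integral_law//.
- apply/(measurable_restrictT _ mG); apply: measurable_funTS.
  exact/measurable_EFinP.
- by move=> y; rewrite patchE; case: ifPn; rewrite ?lee_fin.
Qed.

Lemma law_dominates (A B : set T) (mA : measurable A) (mB : measurable B) :
  A `<=` B -> law mA `<< law mB.
Proof.
move=> AB; apply/null_content_dominatesP => G mG BG0.
apply/eqP; rewrite eq_le measure_ge0 andbT -BG0.
apply: le_measure; rewrite ?inE; try exact: setIS.
- by apply: measurableI => //; exact: measurable_preimage.
- by apply: measurableI => //; exact: measurable_preimage.
Qed.

Lemma exists_cond_prob (E S : set T) : measurable E -> measurable S ->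
  exists psi : TC -> R, [/\ measurable_fun setT psi,
    forall y, (0 <= psi y <= 1)%R & is_cond_prob E S psi].
Proof.
move=> mE mS; have mES := measurableI _ _ mE mS.
have mEN := measurableI _ _ mE (measurableC mS).
have [f1 [f1_ge0 f1_int f1E]] :=
  radon_nikodym_finite (@law_dominates _ _ mES mE (@subIsetl _ _ _)).
have [f2 [f2_ge0 f2_int f2E]] :=
  radon_nikodym_finite (@law_dominates _ _ mEN mE (@subIsetl _ _ _)).
have mf1 := measurable_int _ f1_int; have mf2 := measurable_int _ f2_int.
(* the laws of C on E `&` S and on E `&` ~` S add up to its law on E *)
have f12 : ae_eq (law mE) setT (f1 \+ f2) (cst 1).
  apply: integral_ae_eq => //; first exact: integrableD.
  move=> G _ mG; rewrite ge0_integralD//; try exact: measurable_funTS.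
  rewrite -f1E// -f2E// integral_cst// mul1e /= /mpushforward /pushforward /mrestr.
  have mCG := measurable_preimage mC mG.
  rewrite -measureU; try exact: measurableI.
    by rewrite -setIUr -setIUr setUCr setIT.
  by rewrite setIACA setIid setIACA setIid setICr !setI0.
pose psi y := Num.min (fine (f1 y)) 1%R.
have psiE y : f1 y + f2 y = 1 -> (psi y)%:E = f1 y.
  move=> f12y; have f1le1 : f1 y <= 1 by rewrite -f12y leeDl.
  have f1_fin : f1 y \is a fin_num.
    by rewrite ge0_fin_numE// (le_lt_trans f1le1)// ltry.
  by rewrite /psi min_l ?fineK// -lee_fin fineK.
have mpsi : measurable_fun setT psi.
  by apply: measurable_minr => //; exact: measurableT_comp.
have psi01 y : (0 <= psi y <= 1)%R.
  by rewrite /psi ge_min le_min lexx ler01 orbT !andbT fine_ge0.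
exists psi; split => // G mG; transitivity (law mES G).
  by rewrite /= /mpushforward /pushforward /mrestr setIC.
rewrite f1E// ge0_integral_law_preimage// => [|y]; last by case/andP: (psi01 y).
apply: ae_eq_integral => //; try apply: measurable_funTS => //.
- exact/measurable_EFinP.
- by apply: filterS f12 => y /(_ I) f12y _; rewrite psiE.
Qed.

Lemma ge0_integral_cond_prob (E S : set T) (psi : TC -> R)
    (f : TC -> \bar R) : measurable E -> measurable S ->
  measurable_fun setT psi -> (forall y, 0 <= psi y)%R -> is_cond_prob E S psi ->
  measurable_fun setT f -> (forall y, 0 <= f y) ->
  \int[P]_(x in E `&` S) f (C x) = \int[P]_(x in E) ((psi (C x))%:E * f (C x)).
Proof.
move=> mE mS mpsi psi0 psiE mf f0; have mES := measurableI _ _ mE mS.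
rewrite ge0_integral_law// [LHS](eq_measure_integral (mdensity (law mE) mpsi psi0)).
- rewrite ge0_integral_mdensity// -ge0_integral_law//.
  + by apply: eq_integral => x _; rewrite muleC.
  + by apply: emeasurable_funM => //; exact/measurable_EFinP.
  + by move=> y; rewrite mule_ge0// lee_fin.
- move=> G mG _; transitivity (P (E `&` S `&` C @^-1` G)).
    by rewrite /= /mpushforward /pushforward /mrestr setIC.
  by rewrite psiE// ge0_integral_law_preimage.
Qed.

End conditional_probability.


Local Ltac setX_tauto :=
  apply/seteqP; split=> ?; rewrite /setI /setX /preimage /=; tauto.

Section cond_indep_rules.
Context (R : realType) dT (T : measurableType dT) (P : probability T R).
Variables (E : set T) (mE : measurable E).
Context dX dY dC (TX : measurableType dX) (TY : measurableType dY)
  (TC : measurableType dC).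
Local Open Scope ereal_scope.

Lemma cond_indep_on_sym (X : T -> TX) (Y : T -> TY) (C : T -> TC) :
  measurable_fun setT X -> measurable_fun setT Y -> measurable_fun setT C ->
  cond_indep_on P E X Y C -> cond_indep_on P E Y X C.
Proof.
move=> mX mY mC XY B mB; have mYB := measurable_preimage mY mB.
have [psi [mpsi psi01 psiE]] := exists_cond_prob P mC mE mYB.
exists psi; split => //; split => // A G mA mG; have mXA := measurable_preimage mX mA.
have [phi [mphi [phi01 phiE]]] := XY A mA.
have phi_cp : is_cond_prob P C E (X @^-1` A) phi.
  by move=> G' mG'; have := phiE setT G' measurableT mG'; rewrite preimage_setT !setIT.
have psi0 y : (0 <= psi y)%R by case/andP: (psi01 y).
have phi0 y : (0 <= phi y)%R by case/andP: (phi01 y).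
have patch_ge0 (h : TC -> R) : (forall y, 0 <= h y)%R ->
    forall y, 0 <= ((EFin \o h) \_ G) y.
  by move=> h0 y; rewrite patchE; case: ifPn; rewrite ?lee_fin.
have mpatch (h : TC -> R) : measurable_fun setT h ->
    measurable_fun setT ((EFin \o h) \_ G).
  move=> mh; apply/(measurable_restrictT _ mG); apply: measurable_funTS.
  exact/measurable_EFinP.
(* both sides are \int_E psi (C x) * phi (C x) * \1_G (C x) by the tower
   identities for psi and for phi *)
rewrite (setIAC E (Y @^-1` B)) phiE// !integral_preimage_patch.
rewrite (ge0_integral_cond_prob mC mE mYB mpsi psi0 psiE (mpatch _ mphi)
  (patch_ge0 _ phi0)).
rewrite (ge0_integral_cond_prob mC mE mXA mphi phi0 phi_cp (mpatch _ mpsi)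
  (patch_ge0 _ psi0)).
by apply: eq_integral => x _; rewrite !patchE; case: ifPn; rewrite ?mule0// muleC.
Qed.

Lemma cond_indep_on_comp_cond dC' (TC' : measurableType dC')
    (X : T -> TX) (Y : T -> TY) (C : T -> TC) (k : TC -> TC') (k' : TC' -> TC) :
  measurable_fun setT k -> measurable_fun setT k' -> cancel k k' ->
  cond_indep_on P E X Y C -> cond_indep_on P E X Y (k \o C).
Proof.
move=> mk mk' kK XY A mA; have [phi [mphi [phi01 phiE]]] := XY A mA.
exists (phi \o k'); split; first exact: measurableT_comp.
split=> [c|B G mB mG]; first exact: phi01.
rewrite comp_preimage phiE//; last exact: measurable_preimage.
by apply: eq_integral => x _ /=; rewrite kK.
Qed.

Lemma cond_indep_on_ae_comp dV dV' (TV : measurableType dV)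
    (TV' : measurableType dV') (X : T -> TX) (V : T -> TV) (V' : T -> TV')
    (C : T -> TC) (h : TV -> TV') :
  measurable_fun setT X -> measurable_fun setT V -> measurable_fun setT V' ->
  measurable_fun setT C -> measurable_fun setT h ->
  {ae P, forall x, E x -> V' x = h (V x)} ->
  cond_indep_on P E X V C -> cond_indep_on P E X V' C.
Proof.
move=> mX mV mV' mC mh V'E XV A mA; have [phi [mphi [phi01 phiE]]] := XV A mA.
exists phi; split => //; split => // B G mB mG.
have mhB := measurable_preimage mh mB.
have [mXA mCG] := (measurable_preimage mX mA, measurable_preimage mC mG).
have [mVB mV'B] := (measurable_preimage mV mhB, measurable_preimage mV' mB).
have V'BE (F H : set T) : F `<=` E -> {ae P, forall x,
    (F `&` V' @^-1` B `&` H) x <-> (F `&` V @^-1` (h @^-1` B) `&` H) x}.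
  move=> FE; apply: filterS V'E => x V'x; rewrite /setI /preimage /=.
  by split=> -[[Fx Bx] Hx]; do ?split=> //; move: Bx; rewrite (V'x (FE _ Fx)).
transitivity (P (E `&` X @^-1` A `&` V @^-1` (h @^-1` B) `&` C @^-1` G)).
  apply: (ae_eq_set_measure _ _ (V'BE _ _ _)); last exact: subIsetl.
  - by do 3 apply: measurableI => //.
  - by do 3 apply: measurableI => //.
rewrite phiE//; symmetry.
apply: (ae_eq_set_integral _ _ (V'BE _ _ (@subset_refl _ _))).
- by do 2 apply: measurableI => //.
- by do 2 apply: measurableI => //.
- exact/measurable_EFinP/measurableT_comp.
Qed.

Lemma cond_indep_on_pair dV (TV : measurableType dV)
    (X : T -> TX) (V : T -> TV) (C : T -> TC) :
  measurable_fun setT X -> measurable_fun setT V -> measurable_fun setT C ->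
  cond_indep_on P E X V C -> cond_indep_on P E X (fun x => (C x, V x)) C.
Proof.
move=> mX mV mC XV A mA; have [phi [mphi [phi01 phiE]]] := XV A mA.
exists phi; split => //; split => // M G mM mG.
pose CV x := (C x, V x).
have mCV : measurable_fun setT CV by exact: measurable_fun_pair.
have [mXA mCG] := (measurable_preimage mX mA, measurable_preimage mC mG).
have mS1 : measurable (E `&` X @^-1` A `&` C @^-1` G).
  by do 2 apply: measurableI => //.
have mS2 : measurable (E `&` C @^-1` G) by apply: measurableI.
have mphiC : measurable_fun setT (phi \o C) by exact: measurableT_comp.
have phiC0 x : (0 <= phi (C x))%R by case/andP: (phi01 (C x)).
transitivity (P (CV @^-1` M `&` (E `&` X @^-1` A `&` C @^-1` G))).
  by congr (P _); setX_tauto.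
transitivity (\int[P]_(x in CV @^-1` M `&` (E `&` C @^-1` G)) (phi (C x))%:E);
  last by congr (integral _ _ _); setX_tauto.
(* both sides are finite measures in M that agree on rectangles *)
apply: (@eq_measure_prod _ _ _ _ _ (mpushforward (mrestr P mS1) mCV)
  (mpushforward (mrestr (mdensity P mphiC phiC0) mS2) mCV)) => // G' B mG' mB.
rewrite /= /mpushforward /pushforward /mrestr /mdensity /=.
have -> : CV @^-1` (G' `*` B) `&` (E `&` X @^-1` A `&` C @^-1` G)
    = E `&` X @^-1` A `&` V @^-1` B `&` C @^-1` (G `&` G') by setX_tauto.
rewrite phiE//; last exact: measurableI.
by congr (integral _ _ _); setX_tauto.
Qed.

Lemma cond_indep_on_fun dV dV' (TV : measurableType dV) (TV' : measurableType dV')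
    (X : T -> TX) (V : T -> TV) (V' : T -> TV') (C : T -> TC)
    (h : TC * TV -> TV') :
  measurable_fun setT X -> measurable_fun setT V -> measurable_fun setT V' ->
  measurable_fun setT C -> measurable_fun setT h ->
  {ae P, forall x, E x -> V' x = h (C x, V x)} ->
  cond_indep_on P E X V C -> cond_indep_on P E X V' C.
Proof.
move=> mX mV mV' mC mh V'E XV.
apply: (cond_indep_on_ae_comp _ _ mV' mC mh V'E) => //.
  exact: measurable_fun_pair.
exact: cond_indep_on_pair.
Qed.

End cond_indep_rules.


Lemma measurable_fun_subst_treatment dD dU dEy dEa dY (TD : measurableType dD)
    (TU : measurableType dU) (TEy : measurableType dEy)
    (TEa : measurableType dEa) (TY : measurableType dY)
    (f : bool -> TD -> TU -> TEy -> TY) (g : TD -> TEa -> bool) :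
  measurable_fun setT
    (fun q : bool * TD * TU * TEy => f q.1.1.1 q.1.1.2 q.1.2 q.2) ->
  measurable_fun setT (fun q : TD * TEa => g q.1 q.2) ->
  measurable_fun setT
    (fun q : TU * TD * (TEy * TEa) => f (g q.1.2 q.2.2) q.1.2 q.1.1 q.2.1).
Proof.
move=> mf mg; pose fg q : bool * TD * TU * TEy := (g q.1.2 q.2.2, q.1.2, q.1.1, q.2.1).
apply: (measurableT_comp mf (g := fg)); rewrite /fg.
repeat apply: measurable_fun_pair.
- apply: (measurableT_comp mg (g := fun q : TU * TD * (TEy * TEa) => (q.1.2, q.2.2))).
  apply: measurable_fun_pair.
  + exact: measurableT_comp measurable_snd measurable_fst.
  + exact: measurableT_comp measurable_snd measurable_snd.
- exact: measurableT_comp measurable_snd measurable_fst.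
- exact: measurableT_comp measurable_fst measurable_fst.
- exact: measurableT_comp measurable_fst measurable_snd.
Qed.

Lemma measurable_Dset (R : realType) (dstar eps : R) : measurable (Dset dstar eps).
Proof.
rewrite (_ : Dset dstar eps = `]dstar - eps, dstar + eps[ `&` ~` [set dstar]).
  by apply: measurableI => //; apply: measurableC; exact: measurable_set1.
by apply/seteqP; split=> x; rewrite /Dset /= in_itv/= => -[? /eqP].
Qed.

Theorem lemma1
  (R : realType) (dT : measure_display) (T : measurableType dT)
  (P : probability T R)
  (dZ dW dU dEy dEw dEa : measure_display)
  (TZ : measurableType dZ) (TW : measurableType dW) (TU : measurableType dU)
  (TEy : measurableType dEy) (TEw : measurableType dEw)
  (TEa : measurableType dEa)
  (* observed and latent variables *)
  (Y : T -> R) (A : T -> bool) (D : T -> R) (Z : T -> TZ) (W : T -> TW)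
  (U : T -> TU) (eta_y : T -> TEy) (eta_w : T -> TEw) (eta_a : T -> TEa)
  (mY : measurable_fun setT Y) (mA : measurable_fun setT A)
  (mD : measurable_fun setT D) (mZ : measurable_fun setT Z)
  (mW : measurable_fun setT W) (mU : measurable_fun setT U)
  (my : measurable_fun setT eta_y) (mw : measurable_fun setT eta_w)
  (ma : measurable_fun setT eta_a)
  (* structural functions, general and under exclusion *)
  (Yf : bool -> R -> TZ -> TU -> TEy -> R)
  (Wf : bool -> R -> TZ -> TU -> TEw -> TW)
  (Af : R -> TZ -> TU -> TEa -> bool)
  (Yx : bool -> R -> TU -> TEy -> R) (Wx : TU -> TEw -> TW)
  (Ax : R -> TEa -> bool)
  (mYx : measurable_fun setT
           (fun q : bool * R * TU * TEy => Yx q.1.1.1 q.1.1.2 q.1.2 q.2))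
  (mWx : measurable_fun setT (fun q : TU * TEw => Wx q.1 q.2))
  (mAx : measurable_fun setT (fun q : R * TEa => Ax q.1 q.2))
  (* cutoff, bandwidth, local placebo set *)
  (dstar eps : R) (eps_gt0 : 0 < eps) (Zeps : set TZ) (mZeps : measurable Zeps)
  (hZeps : P (D @^-1` Dset dstar eps `\` Z @^-1` Zeps) = 0%E)
  (* (PV)(a): structural equations, for D in D(eps), Z in Z(eps) *)
  (PVa_Y : {ae P, forall x, D x \in Dset dstar eps -> Z x \in Zeps ->
            Y x = Yf (A x) (D x) (Z x) (U x) (eta_y x)})
  (PVa_W : {ae P, forall x, D x \in Dset dstar eps -> Z x \in Zeps ->
            W x = Wf (A x) (D x) (Z x) (U x) (eta_w x)})
  (PVa_A : {ae P, forall x, D x \in Dset dstar eps -> Z x \in Zeps ->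
            A x = Af (D x) (Z x) (U x) (eta_a x)})
  (* (PV)(b): local conditional independences *)
  (PVb1 : cond_indep_on P (D @^-1` Dset dstar eps)
            Z (fun x => (eta_y x, eta_a x)) (fun x => (U x, D x)))
  (PVb2 : cond_indep_on P (D @^-1` Dset dstar eps)
            eta_w (fun x => (D x, Z x)) U)
  (* (PV)(c): densities exist, positive on the support of U *)
  (PVc : exists (nuZ : {measure set TZ -> \bar R}) (f : bool -> R -> TZ -> TU -> R),
      (forall a, measurable_fun setT
                   (fun q : R * TZ * TU => f a q.1.1 q.1.2 q.2)) /\
      (forall a d z u, 0 <= f a d z u) /\
      (forall a (B : set R) (G : set TZ) (H : set TU),
          measurable B -> measurable G -> measurable H ->
          P (A @^-1` [set a] `&` D @^-1` B `&` Z @^-1` G `&` U @^-1` H) =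
          (\int[P]_(x in U @^-1` H)
             \int[lebesgue_measure]_(d in B) \int[nuZ]_(z in G)
                (f a d z (U x))%:E)%E) /\
      {ae P, forall x, forall a d z, d \in Dset dstar eps -> z \in Zeps ->
                0 < f a d z (U x)})
  (* (PV)(d): exclusion restrictions *)
  (PVd_Y : {ae P, forall x, forall a d z, d \in Dset dstar eps -> z \in Zeps ->
             Yf a d z (U x) (eta_y x) = Yx a d (U x) (eta_y x)})
  (PVd_W : {ae P, forall x, forall a d z, d \in Dset dstar eps -> z \in Zeps ->
             Wf a d z (U x) (eta_w x) = Wx (U x) (eta_w x)})
  (PVd_A : {ae P, forall x, forall d z, d \in Dset dstar eps -> z \in Zeps ->
             Af d z (U x) (eta_a x) = Ax d (eta_a x)}) :
  (* (a) *)
  cond_indep_on P (D @^-1` Dset dstar eps) Y Z (fun x => (D x, U x)) /\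
  (* (b) *)
  cond_indep_on P (D @^-1` Dset dstar eps) W (fun x => (D x, Z x)) U /\
  (* (c) under the extra assumption eta_a _||_ U | D locally *)
  (cond_indep_on P (D @^-1` Dset dstar eps) eta_a U D ->
   cond_indep_on P (D @^-1` Dset dstar eps) A U D).
Proof.
set E := D @^-1` Dset dstar eps.
have mE : measurable E := measurable_preimage mD (measurable_Dset dstar eps).
have mEZ : measurable (E `\` Z @^-1` Zeps).
  exact: measurableD mE (measurable_preimage mZ mZeps).
have on_E := ae_imply_setD0 mEZ hZeps.
have A_E : {ae P, forall x, E x -> A x = Ax (D x) (eta_a x)}.
  apply: on_E; apply: (filterS2 _ _ PVa_A PVd_A) => x Aeq Aex Dx Zx.
  by rewrite Aeq// Aex.
have Y_E : {ae P, forall x, E x ->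
    Y x = Yx (Ax (D x) (eta_a x)) (D x) (U x) (eta_y x)}.
  have YA_E : {ae P, forall x, E x -> Y x = Yx (A x) (D x) (U x) (eta_y x)}.
    apply: on_E; apply: (filterS2 _ _ PVa_Y PVd_Y) => x Yeq Yex Dx Zx.
    by rewrite Yeq// Yex.
  by apply: (filterS2 _ _ YA_E A_E) => x YAx Ax_eq Ex; rewrite YAx// Ax_eq.
have W_E : {ae P, forall x, E x -> W x = Wx (U x) (eta_w x)}.
  apply: on_E; apply: (filterS2 _ _ PVa_W PVd_W) => x Weq Wex Dx Zx.
  by rewrite Weq// Wex.
have mDZ := measurable_fun_pair mD mZ.
split; [|split].
- have mUD := measurable_fun_pair mU mD.
  have mY_UD := measurable_fun_subst_treatment mYx mAx.
  have ZY := cond_indep_on_fun mE mZ (measurable_fun_pair my ma) mY mUD mY_UD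
    Y_E PVb1.
  exact: cond_indep_on_comp_cond (@measurable_swap _ _ TU _)
    (@measurable_swap _ _ _ TU) unstable.swapK (cond_indep_on_sym mE mZ mY mUD ZY).
- have DZ_w := cond_indep_on_sym mE mw mDZ mU PVb2.
  have DZ_W := cond_indep_on_fun mE mDZ mw mW mU mWx W_E DZ_w.
  exact (cond_indep_on_sym mE mDZ mW mU DZ_W).
- move=> eta_a_U; have U_eta_a := cond_indep_on_sym mE ma mU mD eta_a_U.
  have U_A := cond_indep_on_fun mE mU ma mA mD mAx A_E U_eta_a.
  exact (cond_indep_on_sym mE mU mA mD U_A).
Qed.
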